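(* Consider any sequences $\{(x_k,y_k,\gamma_k)\}_{k\ge0}$, $\{(\tilde x_k,u_k,\tilde\gamma_k)\}_{k\ge1}$ generated by the inexact symmetric proximal ADMM described in the context, and set $p_k=B(y_k-y_{k-1})$, $q_k=-\beta(A\tilde x_k+By_k-b)$ for $k\ge1$. Then: (a) $\min\{2\vartheta\langle p_1,q_1\rangle,\ -\|y_1-y_0\|_H^2\}\ge-4d_0$; (b) for every $k\ge2$, $$2(1+\tau)\langle p_k,q_k\rangle\ge2(1-\theta)\langle p_k,q_{k-1}\rangle-2\tau\beta\|p_k\|^2+\|y_k-y_{k-1}\|_H^2-\|y_{k-1}-y_{k-2}\|_H^2.$$
   Context: Let $f:\mathbb{R}^n\to(-\infty,\infty]$ and $g:\mathbb{R}^p\to(-\infty,\infty]$ be proper closed convex functions, $A\in\mathbb{R}^{m\times n}$, $B\in\mathbb{R}^{m\times p}$, $b\in\mathbb{R}^m$ (problem: $\min\{f(x)+g(y):Ax+By=b\}$). Standing assumption: there exists $(x^*,y^*,\gamma^* )$ solving the Lagrangian system $0\in\partial f(x)-A^*\gamma$, $0\in\partial g(y)-B^*\gamma$, $0=Ax+By-b$. Here $\partial$ is the subdifferential, $A^*$ the transpose, $\mathbb{S}^n_{++}$ ($\mathbb{S}^p_+$) the symmetric positive definite (semidefinite) matrices, and $\|z\|_Q=\sqrt{\langle Qz,z\rangle}$ for $Q$ positive semidefinite. Algorithm (inexact symmetric proximal ADMM): given $(x_0,y_0,\gamma_0)\in\mathbb{R}^n\times\mathbb{R}^p\times\mathbb{R}^m$,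 $\beta>0$, $\tilde\sigma,\hat\sigma\in[0,1)$, $G\in\mathbb{S}^n_{++}$, $H\in\mathbb{S}^p_+$, and $(\tau,\theta)\in\mathcal R_{\tilde\sigma}:=\{(\tau,\theta):\tau\in(-1,1-\tilde\sigma),\ \tau+\theta>0,\ (1-\tau^2)(2-\tau-\theta-\tilde\sigma)-(1-\theta)^2(1-\tau-\tilde\sigma)>0\}$. For $k=1,2,\dots$: compute $(\tilde x_k,u_k)$ with $u_k\in\partial f(\tilde x_k)-A^*\tilde\gamma_k$ and $\|\tilde x_k-x_{k-1}+G^{-1}u_k\|_G^2\le\frac{\tilde\sigma}{\beta}\|\tilde\gamma_k-\gamma_{k-1}\|^2+\hat\sigma\|\tilde x_k-x_{k-1}\|_G^2$, where $\tilde\gamma_k=\gamma_{k-1}-\beta(A\tilde x_k+By_{k-1}-b)$; set $\gamma_{k-1/2}=\gamma_{k-1}-\tau\beta(A\tilde x_k+By_{k-1}-b)$; let $y_k$ be an optimal solution of $\min_y\{g(y)-\langle\gamma_{k-1/2},By\rangle+\frac\beta2\|A\tilde x_k+By-b\|^2+\frac12\|y-y_{k-1}\|_H^2\}$; set $x_k=x_{k-1}-G^{-1}u_k$ and $\gamma_k=\gamma_{k-1/2}-\theta\beta(A\tilde x_k+By_k-b)$. Definitions: $T(x,y,\gamma)=(\partial f(x)-A^*\gamma,\ \partial g(y)-B^*\gamma,\ Ax+By-b)$; $M=\begin{bmatrix}G&0&0\\0&H+\frac{(\tau-\tau\theta+\theta)\beta}{\tau+\theta}B^*B&-\frac{\tau}{\tau+\theta}B^*\\0&-\frac{\tau}{\tau+\theta}B&\frac{1}{(\tau+\theta)\beta}I\end{bmatrix}$;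 $z_0=(x_0,y_0,\gamma_0)$; $d_0=\inf\{\|z^*-z_0\|_M^2: z^*\in T^{-1}(0)\}$; $\vartheta=\sqrt{(3-3\tau-2\tilde\sigma)(4-\tau-\theta-2\tilde\sigma)}-2(1-\tau-\tilde\sigma)$. *)

From HB Require Import structures.
From mathcomp Require Import all_boot all_order all_algebra.
From mathcomp Require Import all_classical all_reals all_analysis.
Set Implicit Arguments. Unset Strict Implicit. Unset Printing Implicit Defensive.
Import Order.TTheory GRing.Theory Num.Theory.
Import numFieldNormedType.Exports.
Local Open Scope ring_scope.
Local Open Scope classical_set_scope.

Section ADMMDefs.
Variable R : realType.

Definition dotv (n : nat) (u v : 'cV[R]_n) : R := \sum_(i < n) u i 0 * v i 0.

Definition qnorm2 (n : nat) (Q : 'M[R]_n) (z : 'cV[R]_n) : R := dotv (Q *m z) z.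

Definition norm2 (n : nat) (z : 'cV[R]_n) : R := dotv z z.

Definition symmetric (n : nat) (Q : 'M[R]_n) : Prop := Q^T = Q.

Definition posdef (n : nat) (Q : 'M[R]_n) : Prop :=
  symmetric Q /\ forall z : 'cV[R]_n, z != 0 -> 0 < qnorm2 Q z.

Definition possemidef (n : nat) (Q : 'M[R]_n) : Prop :=
  symmetric Q /\ forall z : 'cV[R]_n, 0 <= qnorm2 Q z.

Definition proper_fun (n : nat) (f : 'cV[R]_n -> \bar R) : Prop :=
  (forall x, f x != -oo%E) /\ (exists x, f x < +oo)%E.

Definition convex_ext (n : nat) (f : 'cV[R]_n -> \bar R) : Prop :=
  forall (x y : 'cV[R]_n) (t : R), 0 < t < 1 ->
    (f ((t *: x + (1 - t) *: y)%R) <= t%:E * f x + (1 - t)%:E * f y)%E.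

Definition closed_fun (n : nat) (f : 'cV[R]_n -> \bar R) : Prop :=
  lower_semicontinuous f.

Definition proper_closed_convex (n : nat) (f : 'cV[R]_n -> \bar R) : Prop :=
  [/\ proper_fun f, closed_fun f & convex_ext f].

Definition subdiff (n : nat) (f : 'cV[R]_n -> \bar R) (x : 'cV[R]_n) : set 'cV[R]_n :=
  [set v | f x \is a fin_num /\
           forall z, (f x + (dotv v (z - x)%R)%:E <= f z)%E].

Definition lagr_sol (n p m : nat) (f : 'cV[R]_n -> \bar R) (g : 'cV[R]_p -> \bar R)
  (A : 'M[R]_(m, n)) (B : 'M[R]_(m, p)) (b : 'cV[R]_m)
  (x : 'cV[R]_n) (y : 'cV[R]_p) (gam : 'cV[R]_m) : Prop :=
  [/\ subdiff f x (A^T *m gam), subdiff g y (B^T *m gam) & A *m x + B *m y - b = 0].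

Definition in_region (sig tau theta : R) : Prop :=
  [/\ -1 < tau < 1 - sig, 0 < tau + theta &
      0 < (1 - tau ^+ 2) * (2 - tau - theta - sig)
          - (1 - theta) ^+ 2 * (1 - tau - sig)].

Definition Mmat (n p m : nat) (G : 'M[R]_n) (H : 'M[R]_p) (B : 'M[R]_(m, p))
  (beta tau theta : R) : 'M[R]_(n + p + m) :=
  block_mx
    (block_mx G 0 0 (H + ((tau - tau * theta + theta) * beta / (tau + theta)) *: (B^T *m B)))
    (col_mx (0 : 'M[R]_(n, m)) (- (tau / (tau + theta)) *: B^T))
    (row_mx (0 : 'M[R]_(m, n)) (- (tau / (tau + theta)) *: B))
    ((1 / ((tau + theta) * beta)) *: 1%:M).

Definition stack3 (n p m : nat) (x : 'cV[R]_n) (y : 'cV[R]_p) (gam : 'cV[R]_m)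
  : 'cV[R]_(n + p + m) := col_mx (col_mx x y) gam.

Definition d0 (n p m : nat) (f : 'cV[R]_n -> \bar R) (g : 'cV[R]_p -> \bar R)
  (A : 'M[R]_(m, n)) (B : 'M[R]_(m, p)) (b : 'cV[R]_m)
  (G : 'M[R]_n) (H : 'M[R]_p) (beta tau theta : R)
  (x0 : 'cV[R]_n) (y0 : 'cV[R]_p) (gam0 : 'cV[R]_m) : \bar R :=
  ereal_inf [set r : \bar R | exists (xs : 'cV[R]_n) (ys : 'cV[R]_p) (gs : 'cV[R]_m),
      lagr_sol f g A B b xs ys gs /\
      r = (qnorm2 (Mmat G H B beta tau theta)
             (stack3 xs ys gs - stack3 x0 y0 gam0))%:E].

Definition vartheta (sig tau theta : R) : R :=
  Num.sqrt ((3 - 3 * tau - 2 * sig) * (4 - tau - theta - 2 * sig))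
  - 2 * (1 - tau - sig).

Definition admm_iter (n p m : nat) (f : 'cV[R]_n -> \bar R) (g : 'cV[R]_p -> \bar R)
  (A : 'M[R]_(m, n)) (B : 'M[R]_(m, p)) (b : 'cV[R]_m)
  (beta sigt sigh tau theta : R) (G : 'M[R]_n) (H : 'M[R]_p)
  (x : nat -> 'cV[R]_n) (y : nat -> 'cV[R]_p) (gam : nat -> 'cV[R]_m)
  (xt : nat -> 'cV[R]_n) (u : nat -> 'cV[R]_n) (gt : nat -> 'cV[R]_m) : Prop :=
  forall k : nat, (1 <= k)%N ->
    let gh := gam k.-1 - (tau * beta) *: (A *m xt k + B *m y k.-1 - b) in
    [/\ gt k = gam k.-1 - beta *: (A *m xt k + B *m y k.-1 - b),
        (* u_k in \partial f(xt_k) - A^* gt_k *)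
        subdiff f (xt k) (u k + A^T *m gt k),
        qnorm2 G (xt k - x k.-1 + invmx G *m u k)
          <= sigt / beta * norm2 (gt k - gam k.-1) + sigh * qnorm2 G (xt k - x k.-1) &
        [/\
        (forall yy : 'cV[R]_p,
           (g (y k) + (- dotv gh (B *m y k)
                       + beta / 2 * norm2 (A *m xt k + B *m y k - b)
                       + 1 / 2 * qnorm2 H (y k - y k.-1))%:E
            <= g yy + (- dotv gh (B *m yy)
                       + beta / 2 * norm2 (A *m xt k + B *m yy - b)
                       + 1 / 2 * qnorm2 H (yy - y k.-1))%:E)%E),
        x k = x k.-1 - invmx G *m u k &
        gam k = gh - (theta * beta) *: (A *m xt k + B *m y k - b)]].

End ADMMDefs.

(* Completing the square in the (y, gamma) block shows that M is positive
   semidefinite, so 4 ||z* - z0||_M^2 >= 4 <z* - z0, z1 - z0>_M - ||z1 - z0||_M^2.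
   Monotonicity of the subdifferentials of f and g at the first iterate against
   a solution of the Lagrangian system, together with the inexactness criterion,
   bounds the cross term from below; what remains is a quadratic form in
   (p1, q1) plus 3 ||y1 - y0||_H^2.  The defining inequality of the region makes
   that form nonnegative, and adding 2 vartheta <p1, q1> turns it into a perfect
   square.  Part (b) is the monotonicity of the subdifferential of g between two
   consecutive y-steps. *)

From Pilot Require Import Defs.
From HB Require Import structures.
From mathcomp Require Import all_boot all_order all_algebra.
From mathcomp Require Import all_classical all_reals all_analysis.
From mathcomp Require Import ring lra.
Set Implicit Arguments. Unset Strict Implicit. Unset Printing Implicit Defensive.
Import Order.TTheory GRing.Theory Num.Theory.
Local Open Scope ring_scope.

Section DotProduct.
Variable R : realType.
Implicit Types (n k : nat).

Lemma dotvC n (u v : 'cV[R]_n) : dotv u v = dotv v u.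
Proof. by apply: eq_bigr => i _; rewrite mulrC. Qed.

Lemma dotvDl n (u v w : 'cV[R]_n) : dotv (u + v) w = dotv u w + dotv v w.
Proof. by rewrite /dotv -big_split; apply: eq_bigr => i _; rewrite mxE mulrDl. Qed.

Lemma dotvDr n (u v w : 'cV[R]_n) : dotv w (u + v) = dotv w u + dotv w v.
Proof. by rewrite dotvC dotvDl !(dotvC w). Qed.

Lemma dotvZl n a (u w : 'cV[R]_n) : dotv (a *: u) w = a * dotv u w.
Proof. by rewrite /dotv mulr_sumr; apply: eq_bigr => i _; rewrite mxE mulrA. Qed.

Lemma dotvZr n a (u w : 'cV[R]_n) : dotv w (a *: u) = a * dotv w u.
Proof. by rewrite dotvC dotvZl dotvC. Qed.

Lemma dotvNl n (u w : 'cV[R]_n) : dotv (- u) w = - dotv u w.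
Proof. by rewrite -scaleN1r dotvZl mulN1r. Qed.

Lemma dotvNr n (u w : 'cV[R]_n) : dotv w (- u) = - dotv w u.
Proof. by rewrite dotvC dotvNl dotvC. Qed.

Lemma dotv0l n (w : 'cV[R]_n) : dotv 0 w = 0.
Proof. by rewrite -(scale0r (0 : 'cV[R]_n)) dotvZl mul0r. Qed.

Lemma dotv_mull n k (M : 'M[R]_(k, n)) (u : 'cV[R]_n) (v : 'cV[R]_k) :
  dotv (M *m u) v = dotv u (M^T *m v).
Proof.
have dotvE l (a c : 'cV[R]_l) : dotv a c = (a^T *m c) 0 0.
  by rewrite mxE; apply: eq_bigr => i _; rewrite mxE.
by rewrite !dotvE trmx_mul mulmxA.
Qed.

Lemma dotv_col_mx n1 n2 (a c : 'cV[R]_n1) (b d : 'cV[R]_n2) :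
  dotv (col_mx a b) (col_mx c d) = dotv a c + dotv b d.
Proof.
by rewrite /dotv big_split_ord; congr (_ + _); apply: eq_bigr => i _;
  rewrite ?col_mxEu ?col_mxEd.
Qed.

Lemma norm2_ge0 n (u : 'cV[R]_n) : 0 <= norm2 u.
Proof. by rewrite sumr_ge0 // => i _; rewrite -expr2 sqr_ge0. Qed.

Lemma dotv_symmetric n (Q : 'M[R]_n) (u v : 'cV[R]_n) :
  Defs.symmetric Q -> dotv (Q *m u) v = dotv (Q *m v) u.
Proof. by move=> symQ; rewrite dotv_mull symQ dotvC. Qed.

Lemma qnorm2N n (Q : 'M[R]_n) (z : 'cV[R]_n) : qnorm2 Q (- z) = qnorm2 Q z.
Proof. by rewrite /qnorm2 mulmxN dotvNl dotvNr opprK. Qed.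

Section Semidefinite.
Variables (n : nat) (Q : 'M[R]_n).
Hypothesis Q_psd : possemidef Q.

Lemma qnorm2_ge0 (z : 'cV[R]_n) : 0 <= qnorm2 Q z.
Proof. exact: Q_psd.2. Qed.

Lemma qnorm2B_le (a c : 'cV[R]_n) :
  qnorm2 Q a - qnorm2 Q c <= 2 * dotv (Q *m (a - c)) a.
Proof.
have := qnorm2_ge0 (a - c).
rewrite /qnorm2 !(mulmxBr, dotvDl, dotvDr, dotvNl, dotvNr).
rewrite (dotv_symmetric c a Q_psd.1); lra.
Qed.

Lemma qnorm2_polar_le (a c : 'cV[R]_n) :
  4 * dotv (Q *m a) c - qnorm2 Q c <= 4 * qnorm2 Q a.
Proof.
have := qnorm2_ge0 (2%:R *: a - c).
rewrite /qnorm2 !(mulmxBr, dotvDl, dotvDr, dotvNl, dotvNr, dotvZl, dotvZr, mulmxDr).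
rewrite -!scalemxAr !(dotvZl, dotvZr) (dotv_symmetric c a Q_psd.1); lra.
Qed.

End Semidefinite.

Lemma posdef_unitmx n (G : 'M[R]_n) : posdef G -> G \in unitmx.
Proof.
case=> symG G_pos; rewrite -row_free_unit -kermx_eq0; apply/negPn/negP => hK.
have [i hi] : exists i, row i (kermx G) != 0.
  apply/existsP; move: hK; apply: contraR; rewrite negb_exists => /forallP h.
  by apply/eqP/row_matrixP => i; rewrite row0; exact/eqP/negPn/h.
set z := (row i (kermx G))^T.
have Gz0 : G *m z = 0 by rewrite /z -{1}symG -trmx_mul -row_mul mulmx_ker row0 trmx0.
by move: (G_pos z); rewrite trmx_eq0 hi /qnorm2 Gz0 dotv0l ltxx => /(_ isT).
Qed.

Lemma posdef_possemidef n (G : 'M[R]_n) : posdef G -> possemidef G.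
Proof.
case=> symG G_pos; split=> // z.
by have [->|/G_pos/ltW] := eqVneq z 0; rewrite // /qnorm2 mulmx0 dotv0l.
Qed.

End DotProduct.

Lemma stack3B (R : realType) n p m (a a' : 'cV[R]_n) (b b' : 'cV[R]_p) (c c' : 'cV[R]_m) :
  stack3 a b c - stack3 a' b' c' = stack3 (a - a') (b - b') (c - c').
Proof. by rewrite /stack3 !opp_col_mx !add_col_mx. Qed.

Section MetricMatrix.
Variables (R : realType) (n p m : nat) (G : 'M[R]_n) (H : 'M[R]_p) (B : 'M[R]_(m, p)).
Variables (beta tau theta : R).
Hypotheses (beta_gt0 : 0 < beta) (tau_theta_gt0 : 0 < tau + theta).
Local Notation M := (Mmat G H B beta tau theta).

(* The (y, y) entry of M splits as (1 - tau) beta B^T B plus the tau^2 beta / (tau + theta)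
   B^T B needed to complete the square with the gamma block. *)
Lemma dotv_Mmat (a1 c1 : 'cV[R]_n) (a2 c2 : 'cV[R]_p) (a3 c3 : 'cV[R]_m) :
  dotv (M *m stack3 a1 a2 a3) (stack3 c1 c2 c3) =
    dotv (G *m a1) c1 + dotv (H *m a2) c2
    + (1 - tau) * beta * dotv (B *m a2) (B *m c2)
    + dotv (a3 - (tau * beta) *: (B *m a2)) (c3 - (tau * beta) *: (B *m c2))
      / ((tau + theta) * beta).
Proof.
rewrite /Mmat /stack3 !mul_block_col !mul_row_col !mul_col_mx !mul0mx ?mulmx0.
rewrite !add_col_mx !(add0r, addr0) !dotv_col_mx mulmxDl.
rewrite -!scalemxAl mul1mx -mulmxA !(dotvDl, dotvDr, dotvNl, dotvNr, dotvZl, dotvZr).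
rewrite !(dotv_mull B^T) trmxK.
by field; rewrite (gt_eqF beta_gt0) (gt_eqF tau_theta_gt0).
Qed.

Lemma Mmat_symmetric : Defs.symmetric G -> Defs.symmetric H -> Defs.symmetric M.
Proof.
move=> symG symH; rewrite /Defs.symmetric /Mmat tr_block_mx tr_block_mx tr_col_mx tr_row_mx.
by rewrite !trmx0 !linearD !linearZ /= trmx_mul trmxK trmx1 symG symH.
Qed.

Lemma Mmat_possemidef :
  possemidef G -> possemidef H -> tau <= 1 -> possemidef M.
Proof.
move=> [symG G_psd] [symH H_psd] tau_le1; split; first exact: Mmat_symmetric.
move=> z; rewrite -[z]vsubmxK -[usubmx z]vsubmxK.
rewrite /qnorm2 -[col_mx (col_mx _ _) _]/(stack3 _ _ _) dotv_Mmat.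
rewrite !addr_ge0 ?G_psd ?H_psd ?mulr_ge0 ?divr_ge0 ?subr_ge0 ?tau_le1 ?norm2_ge0 ?ltW //.
by rewrite invr_gt0 mulr_gt0.
Qed.

End MetricMatrix.

Lemma in_region_pq_coef (R : realType) (sig tau theta : R) :
  0 <= sig -> sig < 1 -> in_region sig tau theta ->
  [/\ 0 < 3 - 3 * tau - 2 * sig, 0 < 4 - tau - theta - 2 * sig &
      4 * (1 - tau - sig) ^+ 2 <= (3 - 3 * tau - 2 * sig) * (4 - tau - theta - 2 * sig)].
Proof.
move=> sig_ge0 sig_lt1 [/andP[tau_gtN1 tau_lt] tau_theta_gt0 det_gt0].
have tau_sig_gt0 : 0 < 1 - tau - sig by lra.
have tau2_lt1 : 0 < 1 - tau ^+ 2 by nra.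
have D_gt0 : 0 < 2 - tau - theta - sig.
  rewrite ltNge; apply/negP => D_le0.
  have : (1 - tau ^+ 2) * (2 - tau - theta - sig) <= 0 by rewrite pmulr_rle0.
  have : 0 <= (1 - theta) ^+ 2 * (1 - tau - sig) by rewrite mulr_ge0 ?sqr_ge0 ?ltW.
  lra.
have W_gt0 : 0 < 3 * (1 - theta) + 5 + tau - 2 * sig.
  have [|theta_gt1] := lerP 0 (1 - theta); first lra.
  have : (1 - theta) ^+ 2 < 1 - tau ^+ 2.
    have : (1 - theta) ^+ 2 * (1 - tau - sig) < (1 - tau ^+ 2) * (1 - tau - sig) by nra.
    by rewrite ltr_pM2r.
  nra.
split; [lra | lra | nra].
Qed.

Section Region.
Variables (R : realType) (sig tau theta beta : R).
Hypotheses (sig_ge0 : 0 <= sig) (sig_lt1 : sig < 1) (region : in_region sig tau theta).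
Hypothesis beta_gt0 : 0 < beta.

Definition pq_form m (P Q : 'cV[R]_m) :=
  (3 - 3 * tau - 2 * sig) * beta * norm2 P + 4 * (1 - tau - sig) * dotv P Q
  + (4 - tau - theta - 2 * sig) / beta * norm2 Q.

Lemma pq_form_ge0 m (P Q : 'cV[R]_m) : 0 <= pq_form P Q.
Proof.
have [a_gt0 c_gt0 disc_le] := in_region_pq_coef sig_ge0 sig_lt1 region.
set a := 3 - 3 * tau - 2 * sig in a_gt0 disc_le *.
set c := 4 - tau - theta - 2 * sig in c_gt0 disc_le *.
set d := 4 * (1 - tau - sig).
have -> : pq_form P Q = 1 / (a * beta) * norm2 ((a * beta) *: P + (d / 2) *: Q)
                        + (4 * a * c - d ^+ 2) / (4 * a * beta) * norm2 Q.
  rewrite /pq_form /norm2 !(dotvDl, dotvDr, dotvZl, dotvZr) (dotvC Q P).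
  by rewrite /a /c /d; field; rewrite !gt_eqF.
have a_beta_gt0 : 0 < a * beta by rewrite mulr_gt0.
apply: addr_ge0; apply: mulr_ge0; rewrite ?norm2_ge0 // divr_ge0 //.
- exact: ltW.
- by rewrite subr_ge0 /d; lra.
- by rewrite -mulrA ltW // mulr_gt0.
Qed.

Lemma pq_form_vartheta_ge0 m (P Q : 'cV[R]_m) :
  0 <= pq_form P Q + 2 * vartheta sig tau theta * dotv P Q.
Proof.
have [a_gt0 c_gt0 _] := in_region_pq_coef sig_ge0 sig_lt1 region.
rewrite /vartheta (sqrtrM _ (ltW a_gt0)).
have sa2 := sqr_sqrtr (ltW a_gt0); have sc2 := sqr_sqrtr (ltW c_gt0).
move: (Num.sqrt (3 - 3 * tau - 2 * sig)) (Num.sqrt (4 - tau - theta - 2 * sig)) sa2 sc2.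
move=> sa sc sa2 sc2.
have -> : pq_form P Q + 2 * (sa * sc - 2 * (1 - tau - sig)) * dotv P Q
          = 1 / beta * norm2 ((sa * beta) *: P + sc *: Q).
  rewrite /pq_form -sa2 -sc2 /norm2 !(dotvDl, dotvDr, dotvZl, dotvZr) (dotvC Q P).
  by field; rewrite gt_eqF.
by rewrite mulr_ge0 ?divr_ge0 ?norm2_ge0 ?ltW.
Qed.

End Region.

Section Subdifferential.
Variable R : realType.

Lemma ler_of_ler_add_tmul (a c K : R) :
  (forall t : R, 0 < t < 1 -> a <= c + t * K) -> a <= c.
Proof.
move=> le_act; apply/ler_addgt0Pr => e e_gt0.
have K1_gt0 : 0 < `|K| + 1 by rewrite ltr_wpDl.
pose t := Num.min (1 / 2) (e / (`|K| + 1)).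
have t_gt0 : 0 < t by rewrite lt_min !divr_gt0.
have t_lt1 : t < 1 by rewrite gt_min; apply/orP; left; lra.
have tK_le : t * K <= e.
  apply: (@le_trans _ _ (t * (`|K| + 1))).
    by rewrite ler_pM2l // (le_trans (ler_norm K)) // lerDl.
  by rewrite -ler_pdivlMr // ge_min lexx orbT.
have := le_act t; rewrite t_gt0 t_lt1 => /(_ isT); lra.
Qed.

Lemma subdiff_monotone n (f : 'cV[R]_n -> \bar R) x1 x2 v1 v2 :
  subdiff f x1 v1 -> subdiff f x2 v2 -> 0 <= dotv (v1 - v2) (x1 - x2).
Proof.
case=> /EFin_fin_numP[a fx1] sub1 [/EFin_fin_numP[c fx2] sub2].
move: (sub1 x2) (sub2 x1); rewrite fx1 fx2 -!EFinD !lee_fin.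
rewrite dotvDl dotvNl -(opprB x1 x2) dotvNr; lra.
Qed.

Lemma minimizer_subdiff n (g : 'cV[R]_n -> \bar R) (phi K : 'cV[R]_n -> R) (y w : 'cV[R]_n) :
  proper_fun g -> convex_ext g ->
  (forall z, (g y + (phi y)%:E <= g z + (phi z)%:E)%E) ->
  (forall d t, phi (y + t *: d) = phi y - t * dotv w d + t ^+ 2 * K d) ->
  subdiff g y w.
Proof.
move=> [g_neqNy [z0 gz0_lty]] g_convex y_min phi_ray.
have gy_fin : g y \is a fin_num.
  rewrite fin_numE g_neqNy /=; apply: contraTneq (y_min z0) => ->.
  rewrite addye // -ltNge; move: gz0_lty (g_neqNy z0).
  by case: (g z0) => [r| |] //= _ _; rewrite -EFinD ltry.
move/EFin_fin_numP: (gy_fin) => [gy gyE]; split=> // z.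
case gzE: (g z) => [gz| |]; [|by rewrite leey|by move: (g_neqNy z); rewrite gzE].
rewrite gyE -EFinD lee_fin; apply: (@ler_of_ler_add_tmul _ _ (K (z - y))) => t /andP[t_gt0 t_lt1].
have ray : t *: z + (1 - t) *: y = y + t *: (z - y).
  by apply/matrixP => i j; rewrite !mxE; ring.
have conv := g_convex z y t; rewrite t_gt0 t_lt1 ray gyE gzE -!EFinM -EFinD in conv.
have := le_trans (y_min (y + t *: (z - y))) (leeD2r _ (conv isT)).
rewrite phi_ray gyE -!EFinD lee_fin => opt.
have : t * (gy + dotv w (z - y)) <= t * (gz + t * K (z - y)) by nra.
by rewrite ler_pM2l.
Qed.

Lemma ysubproblem_subdiff m p (g : 'cV[R]_p -> \bar R) (B : 'M[R]_(m, p)) (H : 'M[R]_p)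
    (X b gh : 'cV[R]_m) (y y' : 'cV[R]_p) (beta : R) :
  proper_fun g -> convex_ext g -> Defs.symmetric H ->
  (forall yy, (g y + (- dotv gh (B *m y) + beta / 2 * norm2 (X + B *m y - b)
                      + 1 / 2 * qnorm2 H (y - y'))%:E
           <= g yy + (- dotv gh (B *m yy) + beta / 2 * norm2 (X + B *m yy - b)
                      + 1 / 2 * qnorm2 H (yy - y'))%:E)%E) ->
  subdiff g y (B^T *m (gh - beta *: (X + B *m y - b)) - H *m (y - y')).
Proof.
move=> g_proper g_convex symH y_min.
apply: (minimizer_subdiff (K := fun d => beta / 2 * norm2 (B *m d) + 1 / 2 * qnorm2 H d)
   g_proper g_convex y_min) => d t.
rewrite /norm2 /qnorm2 !(mulmxDr, mulmxBr, mulmxN) -!scalemxAr.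
rewrite !(dotvDl, dotvDr, dotvNl, dotvNr, dotvZl, dotvZr) !(dotv_mull B^T) trmxK.
rewrite !(dotvDl, dotvNl) (dotv_symmetric d y symH) (dotv_symmetric d y' symH).
rewrite (dotvC (B *m d)) (dotvC (B *m d) (B *m y)) (dotvC (B *m d) b).
by field.
Qed.

End Subdifferential.

Section InexactSymmetricProximalADMM.
Variables (R : realType) (n p m : nat) (f : 'cV[R]_n -> \bar R) (g : 'cV[R]_p -> \bar R).
Variables (A : 'M[R]_(m, n)) (B : 'M[R]_(m, p)) (b : 'cV[R]_m).
Variables (beta sigt sigh tau theta : R) (G : 'M[R]_n) (H : 'M[R]_p).
Variables (x : nat -> 'cV[R]_n) (y : nat -> 'cV[R]_p) (gam : nat -> 'cV[R]_m).
Variables (xt : nat -> 'cV[R]_n) (u : nat -> 'cV[R]_n) (gt : nat -> 'cV[R]_m).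
Hypothesis iter : admm_iter f g A B b beta sigt sigh tau theta G H x y gam xt u gt.
Hypotheses (g_proper : proper_fun g) (g_convex : convex_ext g) (H_psd : possemidef H).
Hypotheses (G_posdef : posdef G) (beta_gt0 : 0 < beta) (tau_theta_gt0 : 0 < tau + theta).
Hypotheses (sigh_lt1 : sigh < 1) (tau_le1 : tau <= 1).

Local Notation pk k := (B *m (y k - y k.-1)).
Local Notation qk k := (- beta *: (A *m xt k + B *m y k - b)).
Local Notation z k := (stack3 (x k) (y k) (gam k)).
Local Notation M := (Mmat G H B beta tau theta).

Lemma admm_gtE k : (1 <= k)%N -> gt k = gam k.-1 + (qk k + beta *: pk k).
Proof.
move=> k1; have [-> _ _ _] := iter k1.
by rewrite !mulmxBr; apply/matrixP => i j; rewrite !mxE; ring.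
Qed.

Lemma admm_gamE k :
  (1 <= k)%N -> gam k = gam k.-1 + ((tau + theta) *: qk k + (tau * beta) *: pk k).
Proof.
move=> k1; have [_ _ _ [_ _ ->]] := iter k1.
by rewrite !mulmxBr; apply/matrixP => i j; rewrite !mxE; ring.
Qed.

Lemma admm_dxE k : (1 <= k)%N -> x k - x k.-1 = - (invmx G *m u k).
Proof. by move=> k1; have [_ _ _ [_ -> _]] := iter k1; rewrite addrAC subrr add0r. Qed.

Lemma admm_subdiff_g k : (1 <= k)%N ->
  subdiff g (y k)
    (B^T *m (gam k.-1 + (1 + tau) *: qk k + (tau * beta) *: pk k) - H *m (y k - y k.-1)).
Proof.
move=> k1; have [_ _ _ [y_min _ _]] := iter k1.
have := ysubproblem_subdiff g_proper g_convex H_psd.1 y_min.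
suff -> : gam k.-1 + (1 + tau) *: qk k + (tau * beta) *: pk k
  = gam k.-1 - (tau * beta) *: (A *m xt k + B *m y k.-1 - b) - beta *: (A *m xt k + B *m y k - b)
  by [].
by rewrite !mulmxBr; apply/matrixP => i j; rewrite !mxE; ring.
Qed.

Lemma admm_pq_recursion k : (2 <= k)%N ->
  2 * (1 - theta) * dotv (pk k) (qk k.-1) - 2 * tau * beta * norm2 (pk k)
    + qnorm2 H (y k - y k.-1) - qnorm2 H (y k.-1 - y k.-2)
  <= 2 * (1 + tau) * dotv (pk k) (qk k).
Proof.
case: k => [|[|k]] // _ /=.
have mono := subdiff_monotone (admm_subdiff_g (k := k.+2) isT) (admm_subdiff_g (k := k.+1) isT).
have polar := qnorm2B_le H_psd (y k.+2 - y k.+1) (y k.+1 - y k).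
rewrite [gam k.+1]admm_gamE //= in mono.
move: mono polar; rewrite /qnorm2 /norm2 !(dotvDl, dotvNl) !(dotv_mull B^T) trmxK.
move: (qk k.+2) (qk k.+1) (pk k.+2) (pk k.+1) => Q2 Q1 P2 P1.
move: (y k.+2 - y k.+1) (y k.+1 - y k) => d2 d1.
rewrite mulmxBr !(dotvDl, dotvNl, dotvZl) !(dotvC P2) => mono polar.
lra.
Qed.

Lemma admm_inexact_le k : (1 <= k)%N ->
  2 * dotv (u k) (xt k - x k.-1)
  <= sigt / beta * norm2 (qk k + beta *: pk k) - qnorm2 G (x k - x k.-1).
Proof.
move=> k1; have [_ _ crit _] := iter k1.
have [symG _] := G_posdef; have G_unit := posdef_unitmx G_posdef.
have slack : 0 <= (1 - sigh) * qnorm2 G (xt k - x k.-1).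
  apply: mulr_ge0; first by rewrite subr_ge0 ltW.
  exact/qnorm2_ge0/posdef_possemidef.
rewrite [gt k]admm_gtE // (addrAC (gam k.-1)) subrr add0r in crit.
move: crit slack; rewrite admm_dxE // qnorm2N; move: (xt k - x k.-1) => et.
rewrite /qnorm2 mulmxDr !(dotvDl, dotvDr) (dotv_symmetric et (invmx G *m u k) symG).
rewrite mulKVmx //; lra.
Qed.

Lemma admm_Mstep_qnorm2E k : (1 <= k)%N ->
  qnorm2 M (z k - z k.-1) = qnorm2 G (x k - x k.-1) + qnorm2 H (y k - y k.-1)
    + (1 - tau) * beta * norm2 (pk k) + (tau + theta) / beta * norm2 (qk k).
Proof.
move=> k1; rewrite stack3B /qnorm2 dotv_Mmat // [gam k]admm_gamE // (addrAC (gam k.-1)) subrr add0r addrK.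
move: (qk k) => Q; rewrite /norm2 dotvZl dotvZr.
by field; rewrite !gt_eqF.
Qed.

Lemma admm_Mcross_ge k xs ys gs : (1 <= k)%N -> lagr_sol f g A B b xs ys gs ->
  (1 - tau) * beta * norm2 (pk k) + (1 - tau) * dotv (pk k) (qk k) + norm2 (qk k) / beta
    + qnorm2 H (y k - y k.-1) - dotv (u k) (xt k - x k.-1)
  <= dotv (M *m (stack3 xs ys gs - z k.-1)) (z k - z k.-1).
Proof.
move=> k1 [f_sub g_sub feas]; have [_ f_subk _ _] := iter k1.
have [symG _] := G_posdef; have G_unit := posdef_unitmx G_posdef.
have Axs : A *m xs = b - B *m ys by move/eqP: feas; rewrite subr_eq0 => /eqP <-; rewrite addrK.
have Aex : A *m (xt k - xs) = - beta^-1 *: qk k - B *m (y k - ys).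
  rewrite !mulmxBr Axs; apply/matrixP => i j; rewrite !mxE.
  by field; rewrite gt_eqF.
have Bey : B *m (y k - ys) = pk k - B *m (ys - y k.-1) by rewrite -mulmxBr opprB addrA subrK.
have ey : y k - ys = (y k - y k.-1) - (ys - y k.-1) by rewrite opprB addrA subrK.
have ex : xt k - xs = (xt k - x k.-1) - (xs - x k.-1) by rewrite opprB addrA subrK.
have monof := subdiff_monotone f_subk f_sub.
rewrite -addrA -mulmxBr dotvDl (dotv_mull A^T) trmxK Aex Bey ex [gt k]admm_gtE // in monof.
have monog := subdiff_monotone (admm_subdiff_g k1) g_sub.
rewrite (addrAC (B^T *m _)) -mulmxBr dotvDl dotvNl (dotv_mull B^T) trmxK Bey ey in monog.
rewrite !stack3B dotv_Mmat // admm_dxE // [gam k]admm_gamE // (addrAC (gam k.-1)) subrr add0r addrK.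
rewrite dotvNr (dotv_mull G) symG mulKVmx //.
rewrite -subr_ge0; apply: le_trans (addr_ge0 monof monog) _.
rewrite le_eqVlt; apply/orP; left; apply/eqP.
move: (qk k) (pk k) (B *m (ys - y k.-1)) (u k) (xt k - x k.-1) (xs - x k.-1) => Q P E U et ex'.
move: (y k - y k.-1) (ys - y k.-1) => d ey'.
rewrite /qnorm2 /norm2 !(dotvDl, dotvDr, dotvNl, dotvNr, dotvZl, dotvZr).
rewrite (dotvC Q P) (dotvC E P) (dotvC E Q) (dotvC ex' U) (dotv_symmetric ey' d H_psd.1).
by field; rewrite !gt_eqF.
Qed.

Lemma admm_Mdist_ge k xs ys gs : (1 <= k)%N -> lagr_sol f g A B b xs ys gs ->
  pq_form sigt tau theta beta (pk k) (qk k) + 3 * qnorm2 H (y k - y k.-1)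
  <= 4 * qnorm2 M (stack3 xs ys gs - z k.-1).
Proof.
move=> k1 sol; have G_psd := posdef_possemidef G_posdef.
have M_psd := Mmat_possemidef B beta_gt0 tau_theta_gt0 G_psd H_psd tau_le1.
have polar := qnorm2_polar_le M_psd (stack3 xs ys gs - z k.-1) (z k - z k.-1).
have inner := admm_Mcross_ge k1 sol.
have inexact := admm_inexact_le k1.
have dx_ge0 := qnorm2_ge0 G_psd (x k - x k.-1).
have expand_dgam : sigt / beta * norm2 (qk k + beta *: pk k)
    = sigt * beta * norm2 (pk k) + 2 * sigt * dotv (pk k) (qk k) + sigt / beta * norm2 (qk k).
  move: (qk k) (pk k) => Q P.
  rewrite /norm2 !(dotvDl, dotvDr, dotvZl, dotvZr) (dotvC Q P).
  by field; rewrite gt_eqF.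
rewrite admm_Mstep_qnorm2E // in polar; rewrite expand_dgam in inexact.
rewrite /pq_form; lra.
Qed.

End InexactSymmetricProximalADMM.

Theorem lemma2p8 (R : realType) (n p m : nat)
  (f : 'cV[R]_n -> \bar R) (g : 'cV[R]_p -> \bar R)
  (A : 'M[R]_(m, n)) (B : 'M[R]_(m, p)) (b : 'cV[R]_m)
  (beta sigt sigh tau theta : R) (G : 'M[R]_n) (H : 'M[R]_p)
  (x : nat -> 'cV[R]_n) (y : nat -> 'cV[R]_p) (gam : nat -> 'cV[R]_m)
  (xt : nat -> 'cV[R]_n) (u : nat -> 'cV[R]_n) (gt : nat -> 'cV[R]_m) :
  proper_closed_convex f -> proper_closed_convex g ->
  (exists xs ys gs, lagr_sol f g A B b xs ys gs) ->
  0 < beta -> 0 <= sigt < 1 -> 0 <= sigh < 1 ->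
  posdef G -> possemidef H -> in_region sigt tau theta ->
  admm_iter f g A B b beta sigt sigh tau theta G H x y gam xt u gt ->
  let pk := fun k => B *m (y k - y k.-1) in
  let qk := fun k => - beta *: (A *m xt k + B *m y k - b) in
  ((Num.min (2 * vartheta sigt tau theta * dotv (pk 1%N) (qk 1%N))
            (- qnorm2 H (y 1%N - y 0%N)))%:E
     >= - 4%:E * d0 f g A B b G H beta tau theta (x 0%N) (y 0%N) (gam 0%N))%E
  /\
  (forall k : nat, (2 <= k)%N ->
     2 * (1 + tau) * dotv (pk k) (qk k)
       >= 2 * (1 - theta) * dotv (pk k) (qk k.-1) - 2 * tau * beta * norm2 (pk k)
          + qnorm2 H (y k - y k.-1) - qnorm2 H (y k.-1 - y k.-2)).
Proof.
move=> _ [g_proper _ g_convex] _ beta_gt0 /andP[sigt_ge0 sigt_lt1] /andP[_ sigh_lt1].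
move=> G_posdef H_psd region iter pk qk.
have [/andP[_ tau_lt] tau_theta_gt0 _] := region.
have tau_le1 : tau <= 1 by lra.
split; last exact: admm_pq_recursion iter g_proper g_convex H_psd.
rewrite -EFinN -lee_ndivrMl ?ltrN10 // -EFinM; apply/ereal_infP => _ [xs [ys [gs [sol ->]]]].
have := admm_Mdist_ge iter g_proper g_convex H_psd G_posdef beta_gt0 tau_theta_gt0 sigh_lt1 tau_le1
  (isT : (1 <= 1)%N) sol.
have := pq_form_ge0 sigt_ge0 sigt_lt1 region beta_gt0 (pk 1%N) (qk 1%N).
have := pq_form_vartheta_ge0 sigt_ge0 sigt_lt1 region beta_gt0 (pk 1%N) (qk 1%N).
have := qnorm2_ge0 H_psd (y 1%N - y 0%N).
rewrite lee_fin; set mn := Num.min _ _; set D := qnorm2 (Mmat _ _ _ _ _ _) _.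
move=> dy_ge0 vartheta_ge0 pq_ge0 dist_lb.
suff : - (4 * D) <= mn by lra.
rewrite le_min; apply/andP; split; lra.
Qed.
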